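(* Assume $C^\top C\succ0$. Let $(\gamma_n)_{n\in\mathbb{N}}$ be a sequence of positive numbers with $\gamma_n\to0$, and for $\widetilde W\in\mathbb{R}^{p^2}$ define $$F^{\gamma_n}(\widetilde W)=f(\widetilde W)+\gamma_n\,g\big((V_2\otimes V_1)\widetilde W\big)+\delta_{\{\widehat{\mathcal{A}}\widetilde W=0\}}(\widetilde W),\qquad F(\widetilde W)=f(\widetilde W)+\delta_{\{\widehat{\mathcal{A}}\widetilde W=0\}}(\widetilde W).$$ Then $\inf F^{\gamma_n}\to\inf F$.
   Context: Let $n,m,M\ge1$, $p=m+n$. For $i=1,\dots,M$ let $A_i\in\mathbb{R}^{n\times n}$, $B_{2,i}\in\mathbb{R}^{n\times m}$, $F_i=\begin{bmatrix}A_i&B_{2,i}\\0&0\end{bmatrix}$. Let $B_1\in\mathbb{R}^{n\times l}$, $C\in\mathbb{R}^{q\times n}$, $D\in\mathbb{R}^{q\times m}$ with $C^\top D=0$, $D^\top D\succ0$, $B_1B_1^\top\succ0$; $Q=\begin{bmatrix}B_1B_1^\top&0\\0&0\end{bmatrix}$, $R=\begin{bmatrix}C^\top C&0\\0&D^\top D\end{bmatrix}$, $V_1=[0,\ I_m]\in\mathbb{R}^{m\times p}$, $V_2=[I_n,\ 0]\in\mathbb{R}^{n\times p}$, $\Psi_i(W)=-V_2(F_iW+WF_i^\top+Q)V_2^\top$. $\mathrm{vec}$ is column-stacking, so $(V_2\otimes V_1)\mathrm{vec}(W)=\mathrm{vec}(V_1WV_2^\top)$. $\Gamma^k_+=\{\mathrm{vec}(X):X\in\mathbb{S}^k_+\}$,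 $\delta_S$ the indicator function of $S$. For $\widetilde W=\mathrm{vec}(W)$: $f(\widetilde W)=\langle\mathrm{vec}(R),\widetilde W\rangle+\delta_{\Gamma^p_+}(\widetilde W)+\sum_{i=1}^M\delta_{\Gamma^n_+}(\mathrm{vec}(\Psi_i(W)))$. $\widehat{\mathcal{A}}$ is the linear map with $\widehat{\mathcal{A}}\,\mathrm{vec}(W)=(W_{ij})_{1\le i<j\le n}$. $g(P)=\sum_{i,j}w_{ij}|P_{ij}|$ for $P\in\mathbb{R}^{mn}$ viewed as an $m\times n$ matrix, with fixed weights $w_{ij}>0$. *)

From HB Require Import structures.
From mathcomp Require Import all_boot all_order all_algebra.
From mathcomp Require Import all_classical all_reals all_analysis.
Set Implicit Arguments. Unset Strict Implicit. Unset Printing Implicit Defensive.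
Import Order.TTheory GRing.Theory Num.Theory.
Local Open Scope ring_scope.

Section Defs.
Variable R : realType.

Definition qform k (X : 'M[R]_k) (x : 'cV[R]_k) : R := (x^T *m X *m x) 0 0.

Definition psd k (X : 'M[R]_k) : Prop := X^T = X /\ forall x, 0 <= qform X x.

Definition pd k (X : 'M[R]_k) : Prop := X^T = X /\ forall x, x != 0 -> 0 < qform X x.

Definition indic (P : Prop) : \bar R := if `[< P >] then 0%E else +oo%E.

Variables (n m l q M : nat).
Variables (A : 'I_M -> 'M[R]_n) (B2 : 'I_M -> 'M[R]_(n, m))
          (B1 : 'M[R]_(n, l)) (C : 'M[R]_(q, n)) (D : 'M[R]_(q, m))
          (w : 'M[R]_(m, n)).

(* p = n + m; first n coordinates then m coordinates *)
Definition Fm (i : 'I_M) : 'M[R]_(n + m) := block_mx (A i) (B2 i) 0 0.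
Definition Qm : 'M[R]_(n + m) := block_mx (B1 *m B1^T) 0 0 0.
Definition Rm : 'M[R]_(n + m) := block_mx (C^T *m C) 0 0 (D^T *m D).
Definition V1 : 'M[R]_(m, n + m) := row_mx 0 1%:M.
Definition V2 : 'M[R]_(n, n + m) := row_mx 1%:M 0.

Definition Psi (i : 'I_M) (W : 'M[R]_(n + m)) : 'M[R]_n :=
  - (V2 *m (Fm i *m W + W *m (Fm i)^T + Qm) *m V2^T).

Definition inner_vec (W : 'M[R]_(n + m)) : R := \sum_i \sum_j Rm i j * W i j.

Definition fobj (W : 'M[R]_(n + m)) : \bar R :=
  ((inner_vec W)%:E + indic (psd W) + \sum_(i < M) indic (psd (Psi i W)))%E.

(* g(P), P viewed as an m x n matrix *)
Definition gobj (P : 'M[R]_(m, n)) : R := \sum_i \sum_j w i j * `|P i j|.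

(* (V2 (x) V1) vec W = vec (V1 W V2^T) *)
Definition Kron_apply (W : 'M[R]_(n + m)) : 'M[R]_(m, n) := V1 *m W *m V2^T.

(* A-hat vec W = 0  <=>  W_ij = 0 for 1 <= i < j <= n *)
Definition Ahat_zero (W : 'M[R]_(n + m)) : Prop :=
  forall i j : 'I_(n + m), (i < j)%N -> (j < n)%N -> W i j = 0.

Definition Fgamma (gam : R) (W : 'M[R]_(n + m)) : \bar R :=
  (fobj W + (gam * gobj (Kron_apply W))%:E + indic (Ahat_zero W))%E.

Definition Fobj (W : 'M[R]_(n + m)) : \bar R :=
  (fobj W + indic (Ahat_zero W))%E.

End Defs.

From HB Require Import structures.
From mathcomp Require Import all_boot all_order all_algebra.
From mathcomp Require Import all_classical all_reals all_analysis.
Import Order.TTheory GRing.Theory Num.Theory.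
Local Open Scope ring_scope.
Local Open Scope classical_set_scope.

(** The penalty [gam_k g] is nonnegative, so [inf F <= inf F^gam_k] for every
    [k].  Conversely, for each fixed [W] the values [F W + gam_k g W] tend to
    [F W], so [limsup_k inf F^gam_k <= F W]; taking the infimum over [W] gives
    [limsup_k inf F^gam_k <= inf F].  No property of [f], [g] or the constraint
    beyond [g >= 0] is needed. *)

Section penalized_infimum.
Variable R : realType.
Local Open Scope ereal_scope.

Lemma le_limn_esup (u v : (\bar R)^nat) :
  (forall k, u k <= v k) -> limn_esup u <= limn_esup v.
Proof.
move=> uv; rewrite !limn_esup_lim.
apply: lee_lim; [exact: is_cvg_esups | exact: is_cvg_esups |].
apply: nearW => k; apply: ge_ereal_sup => _ [j /= kj <-].
by apply: le_trans (uv j) _; apply: ereal_sup_ubound; exists j.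
Qed.

Lemma cvge_addEFin0 (e : \bar R) (r : R^nat) :
  r @ \oo --> 0%R -> (fun k => e + (r k)%:E) @ \oo --> e.
Proof.
move=> r0; rewrite -[X in _ --> X]adde0.
apply: (cvgeD (fin_num_adde_defl _ _) (cvg_cst e)) => //.
by apply: cvg_EFin; [exact: nearW | exact: r0].
Qed.

Lemma cvg_ereal_inf_penalty (T : Type) (F : T -> \bar R) (G : T -> R)
    (gam : R^nat) :
  (forall t, 0 <= G t)%R -> (forall k, 0 <= gam k)%R -> gam @ \oo --> 0%R ->
  (fun k => ereal_inf (range (fun t => F t + (gam k * G t)%:E)))
    @ \oo --> ereal_inf (range F).
Proof.
move=> G_ge0 gam_ge0 gam0.
apply: limn_esup_le_cvg; last first.
  move=> k; apply: le_ereal_inf_tmp => _ [t _ <-].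
  apply: le_trans (ereal_inf_lbound _) (leeDl _ _); first by exists t.
  by rewrite lee_fin mulr_ge0.
apply: le_ereal_inf_tmp => _ [t _ <-].
have Ft_cvg : (fun k => F t + (gam k * G t)%:E) @ \oo --> F t.
  by apply: cvge_addEFin0; rewrite -(mul0r (G t)); apply: cvgMr_tmp.
rewrite -(cvg_lim _ Ft_cvg) // -is_cvg_limn_esupE; last exact: cvgP Ft_cvg.
by apply: le_limn_esup => k; apply: ereal_inf_lbound; exists t.
Qed.

End penalized_infimum.

Lemma gobj_ge0 (R : realType) (m n : nat) (w P : 'M[R]_(m, n)) :
  (forall i j, 0 <= w i j) -> 0 <= gobj w P.
Proof.
move=> w_ge0; apply: sumr_ge0 => i _; apply: sumr_ge0 => j _.
by rewrite mulr_ge0.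
Qed.

Theorem proposition16 (R : realType) (n m l q M : nat)
  (A : 'I_M -> 'M[R]_n) (B2 : 'I_M -> 'M[R]_(n, m))
  (B1 : 'M[R]_(n, l)) (C : 'M[R]_(q, n)) (D : 'M[R]_(q, m))
  (w : 'M[R]_(m, n)) (gam : nat -> R) :
  (1 <= n)%N -> (1 <= m)%N -> (1 <= M)%N ->
  C^T *m D = 0 ->
  pd (D^T *m D) ->
  pd (B1 *m B1^T) ->
  pd (C^T *m C) ->
  (forall i j, 0 < w i j) ->
  (forall k, 0 < gam k) ->
  gam @ \oo --> 0 ->
  (fun k => ereal_inf (range (Fgamma A B2 B1 C D w (gam k))))
    @ \oo --> ereal_inf (range (Fobj A B2 B1 C D)).
Proof.
move=> _ _ _ _ _ _ _ w_gt0 gam_gt0 gam0.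
have FgammaE k : Fgamma A B2 B1 C D w (gam k) = fun W =>
    (Fobj A B2 B1 C D W + (gam k * gobj w (Kron_apply W))%:E)%E.
  by apply: funext => W; rewrite /Fgamma addeAC.
have infE k : ereal_inf (range (Fgamma A B2 B1 C D w (gam k))) =
    ereal_inf (range (fun W =>
      (Fobj A B2 B1 C D W + (gam k * gobj w (Kron_apply W))%:E)%E)).
  by rewrite FgammaE.
rewrite (funext infE).
apply: (@cvg_ereal_inf_penalty _ _ _ (fun W => gobj w (Kron_apply W)))
  => // [W | k].
  by apply: gobj_ge0 => i j; exact: ltW.
exact: ltW.
Qed.
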